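(* Let $V=V(\alpha_1)\otimes\cdots\otimes V(\alpha_d)$ be a standard $U_q(\widehat{\mathfrak{sl}}_2)$-module with feasible diameter $d$. Then its Drinfel'd polynomial satisfies $$P_V=\prod_{i=1}^d P_{V(\alpha_i)}.$$
   Context: Let $\mathbb F$ be an algebraically closed field and fix nonzero $q\in\mathbb F$ with $q^2\ne1$; write $[n]_q=(q^n-q^{-n})/(q-q^{-1})$. $U_q(\widehat{\mathfrak{sl}}_2)$ is the associative unital $\mathbb F$-algebra with generators $e_i^{\pm},K_i^{\pm1}$ ($i\in\{0,1\}$) and relations $K_iK_i^{-1}=K_i^{-1}K_i=1$, $K_0K_1=K_1K_0$, $K_ie_i^{\pm}K_i^{-1}=q^{\pm2}e_i^{\pm}$, $K_ie_j^{\pm}K_i^{-1}=q^{\mp2}e_j^{\pm}$ ($i\ne j$), $e_i^+e_i^--e_i^-e_i^+=(K_i-K_i^{-1})/(q-q^{-1})$, $e_0^{\pm}e_1^{\mp}=e_1^{\mp}e_0^{\pm}$, and $(e_i^\pm)^3e_j^\pm-[3]_q(e_i^\pm)^2e_j^\pm e_i^\pm+[3]_qe_i^\pm e_j^\pm(e_i^\pm)^2-e_j^\pm(e_i^\pm)^3=0$ ($i\ne j$). Tensor products of modules are formed via $e_i^+(v\otimes w)=e_i^+v\otimes K_iw+v\otimes e_i^+w$, $e_i^-(v\otimes w)=e_i^-v\otimes w+K_i^{-1}v\otimes e_i^-w$, $K_i(v\otimes w)=K_iv\otimes K_iw$. For nonzero $\alpha\in\mathbb F$, $V(\alpha)$ is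 the module with basis $x,y$ and $K_1x=qx$, $K_1y=q^{-1}y$, $e_1^-x=y$, $e_1^-y=0$, $e_1^+x=0$, $e_1^+y=x$, $K_0x=q^{-1}x$, $K_0y=qy$, $e_0^-x=0$, $e_0^-y=q\alpha^{-1}x$, $e_0^+x=q^{-1}\alpha y$, $e_0^+y=0$. A standard module of diameter $d$ is $V(\alpha_1)\otimes\cdots\otimes V(\alpha_d)$ with all $\alpha_i\in\mathbb F$ nonzero (for $d=0$: the trivial module, on which each $e_i^\pm$ acts as $0$ and each $K_i^{\pm1}$ as $1$). An integer $d$ is feasible if $d\ge0$ and $q^{2i}\ne1$ for $1\le i\le d$. For a standard $V$ of diameter $d$, $U_0$ is the $1$-dimensional span of $x\otimes\cdots\otimes x$. Fix nonzero $b,c,b^*,c^*\in\mathbb F$ and $u,v,u^*,v^*\in\mathbb F$ with $uv^*=-bb^*q^{-1}(q-q^{-1})^2$ and $vu^*=-cc^*q^{-1}(q-q^{-1})^2$; set $R=ue_0^++ve_1^-K_1$ and $L=u^*e_1^++v^*e_0^-K_0$. For a standard module $V$ of feasible diameter $d$ and $0\le i\le d$, $\zeta_i$ is the scalar by which $L^iR^i$ acts on $U_0$, and $\sigma_i=\zeta_i/\prod_{k=1}^i(q^k-q^{-k})^2$. For $i\ge0$ let $f_i=bb^*q^{-2i}+cc^*q^{2i}-\lambda\in\mathbb F[\lambda]$. The Drinfel'd polynomial of $V$ is the monic degree-$d$ polynomial $P_V=(-1)^d\sum_{i=0}^d\sigma_{d-i}f_0f_1\cdots f_{i-1}$. *)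

From HB Require Import structures.
From mathcomp Require Import all_boot all_order all_algebra.
Set Implicit Arguments. Unset Strict Implicit. Unset Printing Implicit Defensive.
Import Order.TTheory GRing.Theory Num.Theory.
Local Open Scope ring_scope.

Section Uqsl2.
Variable F : closedFieldType.

(* Generators of U_q(sl2^): K_i, K_i^{-1}, e_i^+, e_i^- for i in {0,1}. *)
Inductive gen := K0 | K1 | K0i | K1i | E0p | E0m | E1p | E1m.

Fixpoint dimV (d : nat) : nat := if d is d'.+1 then (dimV d' + dimV d')%N else 1%N.

(* Kronecker product of a 2x2 matrix with an n x n matrix; the basis of
   V(a) (x) W is ordered as (x (x) W, y (x) W).  Column convention:
   (A (x) B) (e_j (x) w) = sum_i A i j e_i (x) B w. *)
Definition kron2 n (A : 'M[F]_2) (B : 'M[F]_n) : 'M[F]_(n + n) :=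
  block_mx (A 0 0 *: B) (A 0 1 *: B) (A 1 0 *: B) (A 1 1 *: B).

(* Matrix (in the basis x = index 0, y = index 1) of a generator on V(alpha),
   acting on column vectors. *)
Definition baseV (q alpha : F) (g : gen) : 'M[F]_2 :=
  \matrix_(i < 2, j < 2)
   match g with
   | K1  => if (i == 0) && (j == 0) then q else if (i == 1) && (j == 1) then q^-1 else 0
   | K1i => if (i == 0) && (j == 0) then q^-1 else if (i == 1) && (j == 1) then q else 0
   | K0  => if (i == 0) && (j == 0) then q^-1 else if (i == 1) && (j == 1) then q else 0
   | K0i => if (i == 0) && (j == 0) then q else if (i == 1) && (j == 1) then q^-1 else 0
   | E1m => if (i == 1) && (j == 0) then 1 else 0            (* e1^- x = y *)
   | E1p => if (i == 0) && (j == 1) then 1 else 0            (* e1^+ y = x *)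
   | E0m => if (i == 0) && (j == 1) then q / alpha else 0    (* e0^- y = q a^-1 x *)
   | E0p => if (i == 1) && (j == 0) then alpha / q else 0    (* e0^+ x = q^-1 a y *)
   end.

(* Action of the generators on the standard module
   V(a_1) (x) (V(a_2) (x) ( ... (x) V(a_d))), via the given coproduct. *)
Fixpoint stdact (q : F) (s : seq F) (g : gen) {struct s} : 'M[F]_(dimV (size s)) :=
  match s return 'M[F]_(dimV (size s)) with
  | [::] => match g with K0 | K1 | K0i | K1i => 1%:M | _ => 0 end
  | a :: s' =>
    let A := baseV q a in
    let B := stdact q s' in
    match g with
    | K0 => kron2 (A K0) (B K0)
    | K1 => kron2 (A K1) (B K1)
    | K0i => kron2 (A K0i) (B K0i)
    | K1i => kron2 (A K1i) (B K1i)
    | E0p => kron2 (A E0p) (B K0) + kron2 1%:M (B E0p)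
    | E1p => kron2 (A E1p) (B K1) + kron2 1%:M (B E1p)
    | E0m => kron2 (A E0m) 1%:M + kron2 (A K0i) (B E0m)
    | E1m => kron2 (A E1m) 1%:M + kron2 (A K1i) (B E1m)
    end
  end.

(* The vector x (x) ... (x) x spanning U_0. *)
Fixpoint u0vec (d : nat) : 'cV[F]_(dimV d) :=
  match d return 'cV[F]_(dimV d) with
  | 0 => 1%:M
  | d'.+1 => col_mx (u0vec d') 0
  end.

Definition Rop (q u v : F) (s : seq F) : 'M[F]_(dimV (size s)) :=
  u *: stdact q s E0p + v *: (stdact q s E1m *m stdact q s K1).
Definition Lop (q us vs : F) (s : seq F) : 'M[F]_(dimV (size s)) :=
  us *: stdact q s E1p + vs *: (stdact q s E0m *m stdact q s K0).

(* zeta_i: the scalar by which L^i R^i acts on U_0 = span(u0), i.e. the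
   coefficient of u0 in L^i R^i u0 (u0 is a standard basis vector). *)
Definition zeta (q u v us vs : F) (s : seq F) (i : nat) : F :=
  ((u0vec (size s))^T *m
     iter i (mulmx (Lop q us vs s)) (iter i (mulmx (Rop q u v s)) (u0vec (size s)))) 0 0.

Definition sigma (q u v us vs : F) (s : seq F) (i : nat) : F :=
  zeta q u v us vs s i / \prod_(k < i) (q ^+ k.+1 - q ^- k.+1) ^+ 2.

Definition fpol (q b c bs cs : F) (i : nat) : {poly F} :=
  (b * bs * q ^- (2 * i) + c * cs * q ^+ (2 * i))%:P - 'X.

Definition drinfeld (q b c bs cs u v us vs : F) (s : seq F) : {poly F} :=
  (-1) ^+ size s *
  \sum_(i < (size s).+1)
     (sigma q u v us vs s (size s - i))%:P * \prod_(j < i) fpol q b c bs cs j.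

Definition feasible (q : F) (d : nat) : Prop :=
  forall i : nat, (1 <= i <= d)%N -> q ^+ (2 * i) != 1.

End Uqsl2.

From HB Require Import structures.
From mathcomp Require Import all_boot all_order all_algebra.
From mathcomp Require Import ring.
Import Order.TTheory GRing.Theory Num.Theory.
Local Open Scope ring_scope.
Set Implicit Arguments. Unset Strict Implicit. Unset Printing Implicit Defensive.

(* Write V = V(a) (x) W with W standard of diameter d.  In the basis
   (x (x) W, y (x) W) the raising operator R is block lower-triangular and the
   lowering operator L block upper-triangular, with R_W, L_W on the diagonal
   and linear combinations of K0, K1 off it.  Since R and L shift the
   K1-weight by q^-2 and q^2, these off-diagonal blocks act on the vectors
   L^t R^j u0 by explicit scalars, and iterating the block matrices gives
     zeta_V(j+1) = zeta_W(j+1) + (sum of R-scalars) (sum of L-scalars) zeta_W(j).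
   Both sums are geometric and their product is
   (q^(j+1) - q^-(j+1))^2 (rho a - theta (d - j)), whence
     sigma_V(j+1) = sigma_W(j+1) + (rho a - theta (d - j)) sigma_W(j).
   A reindexing of the defining sums turns this recursion into
   P_V = (X - rho a) P_W (lemma drinfeld_sum_recursion), and the theorem
   follows by induction on the list of parameters, since P_{V(a)} = X - rho a. *)

Section IteratedProducts.
Variables (R : comPzRingType) (n : nat).
Implicit Types (M N X Y Z : 'M[R]_n) (w : 'cV[R]_n).

Lemma iter_mulmx_scale M c w k :
  iter k (mulmx M) (c *: w) = c *: iter k (mulmx M) w.
Proof. by elim: k => [|k IH] //; rewrite !iterS IH scalemxAr. Qed.

Lemma iter_mulmx0 M k : iter k (mulmx M) (0 : 'cV[R]_n) = 0.
Proof. by elim: k => [|k IH] //; rewrite iterS IH mulmx0. Qed.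

Lemma iter_mulmx_qcomm N M c w k : N *m M = c *: (M *m N) ->
  N *m iter k (mulmx M) w = c ^+ k *: iter k (mulmx M) (N *m w).
Proof.
move=> NM; elim: k => [|k IH]; first by rewrite expr0 scale1r.
by rewrite !iterS mulmxA NM -scalemxAl -mulmxA IH -scalemxAr scalerA exprS.
Qed.

Lemma iter_lower_block X Y w (phi : nat -> R) :
  (forall k, Y *m iter k (mulmx X) w = phi k *: iter k (mulmx X) w) ->
  forall j, iter j.+1 (mulmx (block_mx X 0 Y X)) (col_mx w 0) =
   col_mx (iter j.+1 (mulmx X) w) ((\sum_(k < j.+1) phi k) *: iter j (mulmx X) w).
Proof.
move=> Yw; elim=> [|j IH].
  by rewrite /= mul_block_col !mulmx0 !addr0 big_ord1 (Yw 0%N).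
rewrite iterS IH mul_block_col mul0mx addr0 (Yw j.+1) -scalemxAr.
by rewrite (big_ord_recr j.+1) !iterS /= scalerDl addrC.
Qed.

Lemma iter_upper_block X Z (p r : 'cV[R]_n) (psi : nat -> R) :
  (forall t, Z *m iter t (mulmx X) r = psi t *: iter t (mulmx X) r) ->
  forall j, iter j.+1 (mulmx (block_mx X Z 0 X)) (col_mx p r) =
   col_mx (iter j.+1 (mulmx X) p + (\sum_(t < j.+1) psi t) *: iter j (mulmx X) r)
          (iter j.+1 (mulmx X) r).
Proof.
move=> Zr; elim=> [|j IH].
  by rewrite /= mul_block_col !mul0mx !add0r big_ord1 (Zr 0%N).
rewrite iterS IH mul_block_col mul0mx add0r (Zr j.+1) mulmxDr -scalemxAr.
by rewrite (big_ord_recr j.+1) !iterS /= scalerDl addrA.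
Qed.

End IteratedProducts.

Lemma geometric_sum (K : fieldType) (x : K) n : x != 1 ->
  \sum_(k < n) x ^+ k = (x ^+ n - 1) / (x - 1).
Proof. by move=> x1; rewrite subrX1 [(x - 1) * _]mulrC mulfK // subr_eq0. Qed.

Section DrinfeldRecursion.
Variables (R : comNzRingType) (D : nat) (sg sg' th : nat -> R) (r : R).
Hypothesis sg'0 : sg' 0 = sg 0.
Hypothesis sg_top : sg D.+1 = 0.
Hypothesis sg'S : forall j, (j <= D)%N -> sg' j.+1 = sg j.+1 + (r - th (D - j)) * sg j.

Let Fp (i : nat) : {poly R} := \prod_(j < i) ((th j)%:P - 'X).

Lemma drinfeld_sum_recursion :
  (-1) ^+ D.+1 * \sum_(i < D.+2) (sg' (D.+1 - i))%:P * Fp i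
  = ('X - r%:P) * ((-1) ^+ D * \sum_(i < D.+1) (sg (D - i))%:P * Fp i).
Proof.
have shift : \sum_(i < D.+2) (sg (D.+1 - i))%:P * Fp i
    = \sum_(i < D.+1) (sg (D - i))%:P * Fp i * ((th i)%:P - 'X).
  rewrite big_ord_recl subn0 sg_top mul0r add0r; apply: eq_bigr => i _.
  by rewrite subSS /Fp big_ord_recr mulrA.
have split : \sum_(i < D.+2) (sg' (D.+1 - i))%:P * Fp i
    = \sum_(i < D.+2) (sg (D.+1 - i))%:P * Fp i
      + \sum_(i < D.+1) ((r - th i) * sg (D - i))%:P * Fp i.
  rewrite [LHS]big_ord_recr [X in _ = X + _]big_ord_recr /= subnn sg'0.
  rewrite addrAC -big_split /=; congr (_ + _).
  apply: eq_bigr => i _; have iD : (i <= D)%N by rewrite -ltnS.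
  by rewrite subSn // sg'S ?leq_subr // subKn // polyCD mulrDl.
rewrite split shift -big_split /=.
rewrite (eq_bigr (fun i : 'I_D.+1 => (sg (D - i))%:P * Fp i * (r%:P - 'X))).
  by rewrite -mulr_suml exprS; ring.
by move=> i _; rewrite polyCM polyCB; ring.
Qed.

End DrinfeldRecursion.

Section StandardModule.
Variables (F : closedFieldType) (q : F).
Hypothesis q_neq0 : q != 0.

Notation K1m s := (stdact q s K1).
Notation K0m s := (stdact q s K0).
Notation u0 s := (u0vec F (size s)).

Lemma K1_cons a s : K1m (a :: s) = block_mx (q *: K1m s) 0 0 (q^-1 *: K1m s).
Proof. by rewrite /= /kron2 !mxE /= !scale0r. Qed.

Lemma K0_cons a s : K0m (a :: s) = block_mx (q^-1 *: K0m s) 0 0 (q *: K0m s).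
Proof. by rewrite /= /kron2 !mxE /= !scale0r. Qed.

Lemma K0_K1 s : K0m s *m K1m s = 1%:M.
Proof.
elim: s => [|a s IH]; first by rewrite /= mulmx1.
rewrite K0_cons K1_cons mulmx_block !mulmx0 !mul0mx !addr0 !add0r.
rewrite -!scalemxAl -!scalemxAr !scalerA IH mulVf // mulfV // !scale1r.
by rewrite [RHS]scalar_mx_block.
Qed.

Lemma K1_K0 s : K1m s *m K0m s = 1%:M.
Proof.
elim: s => [|a s IH]; first by rewrite /= mulmx1.
rewrite K0_cons K1_cons mulmx_block !mulmx0 !mul0mx !addr0 !add0r.
rewrite -!scalemxAl -!scalemxAr !scalerA IH mulVf // mulfV // !scale1r.
by rewrite [RHS]scalar_mx_block.
Qed.

Lemma K0_eigen s (w : 'cV[F]_(dimV (size s))) lam :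
  lam != 0 -> K1m s *m w = lam *: w -> K0m s *m w = lam^-1 *: w.
Proof.
move=> lam0 K1w; apply: (canRL (scalerK lam0)).
by rewrite scalemxAr -K1w mulmxA K0_K1 mul1mx.
Qed.

Lemma Rop_nil u v : Rop q u v [::] = 0.
Proof. by rewrite /Rop /= scaler0 mul0mx scaler0 addr0. Qed.

Lemma Lop_nil us vs : Lop q us vs [::] = 0.
Proof. by rewrite /Lop /= scaler0 mul0mx scaler0 addr0. Qed.

Lemma Rop_cons u v a s : Rop q u v (a :: s) =
  block_mx (Rop q u v s) 0 ((u * (a / q)) *: K0m s + (v * q) *: K1m s) (Rop q u v s).
Proof.
rewrite /Rop /= /kron2 !mxE /= !scale0r !scale1r.
rewrite !add_block_mx mulmx_block !scale_block_mx !add_block_mx.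
rewrite ?mul0mx ?mulmx0 ?add0r ?addr0 ?mul1mx; congr block_mx.
all: rewrite -?scalemxAl -?scalemxAr ?scalerA ?scaler0 ?addr0 ?add0r.
all: by rewrite ?divfK ?mulfK ?mul0mx ?scaler0.
Qed.

Lemma Lop_cons us vs a s : Lop q us vs (a :: s) =
  block_mx (Lop q us vs s) (us *: K1m s + (vs * (q / a * q)) *: K0m s) 0 (Lop q us vs s).
Proof.
rewrite /Lop /= /kron2 !mxE /= !scale0r !scale1r.
rewrite !add_block_mx mulmx_block !scale_block_mx !add_block_mx.
rewrite ?mul0mx ?mulmx0 ?add0r ?addr0 ?mul1mx; congr block_mx.
all: rewrite -?scalemxAl -?scalemxAr ?scalerA ?scaler0 ?addr0 ?add0r.
all: by rewrite ?divfK ?mulfK ?mul0mx ?mul1mx ?scaler0 ?mulrA.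
Qed.

Lemma K1_comm s x y :
  K1m s *m (x *: K0m s + y *: K1m s) = (x *: K0m s + y *: K1m s) *m K1m s.
Proof. by rewrite mulmxDr mulmxDl -!scalemxAr -!scalemxAl K0_K1 K1_K0. Qed.

Lemma K1_Rop u v s : K1m s *m Rop q u v s = q ^- 2 *: (Rop q u v s *m K1m s).
Proof.
elim: s => [|a s IH]; first by rewrite Rop_nil mulmx0 mul0mx scaler0.
rewrite K1_cons Rop_cons !mulmx_block !mulmx0 !mul0mx !addr0 !add0r scale_block_mx scaler0.
congr block_mx; rewrite -!scalemxAl -!scalemxAr ?IH ?K1_comm !scalerA.
all: by congr (_ *: _); field.
Qed.

Lemma K1_Lop us vs s : K1m s *m Lop q us vs s = q ^+ 2 *: (Lop q us vs s *m K1m s).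
Proof.
elim: s => [|a s IH]; first by rewrite Lop_nil mulmx0 mul0mx scaler0.
rewrite K1_cons Lop_cons !mulmx_block !mulmx0 !mul0mx !addr0 !add0r scale_block_mx scaler0.
have K1_comm' x y : K1m s *m (x *: K1m s + y *: K0m s) = (x *: K1m s + y *: K0m s) *m K1m s.
  by rewrite addrC K1_comm addrC.
congr block_mx; rewrite -!scalemxAl -!scalemxAr ?IH ?K1_comm' !scalerA.
all: by congr (_ *: _); field.
Qed.

Lemma K1_u0 s : K1m s *m u0 s = q ^+ size s *: u0 s.
Proof.
elim: s => [|a s IH]; first by rewrite /= mul1mx expr0 scale1r.
by rewrite K1_cons /= mul_block_col !mulmx0 !addr0 mul0mx -scalemxAl IH
  scalerA scale_col_mx scaler0 exprS.
Qed.

(* K1-eigenvalue of L^t R^j u0 on a standard module of diameter d. *)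
Definition weight (d j t : nat) : F := q ^+ d * (q ^- 2) ^+ j * (q ^+ 2) ^+ t.

Lemma weight_neq0 d j t : weight d j t != 0.
Proof. by rewrite /weight !mulf_neq0 // !expf_neq0 // invr_eq0 expf_neq0. Qed.

Notation Rpow u v s j := (iter j (mulmx (Rop q u v s)) (u0 s)).
Notation LRpow u v us vs s j t := (iter t (mulmx (Lop q us vs s)) (Rpow u v s j)).

Lemma K1_Rpow u v s j : K1m s *m Rpow u v s j = weight (size s) j 0 *: Rpow u v s j.
Proof.
rewrite (iter_mulmx_qcomm _ _ (K1_Rop u v s)) K1_u0 iter_mulmx_scale scalerA.
by rewrite /weight expr0 mulr1 mulrC.
Qed.

Lemma K1_LRpow u v us vs s j t :
  K1m s *m LRpow u v us vs s j t = weight (size s) j t *: LRpow u v us vs s j t.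
Proof.
rewrite (iter_mulmx_qcomm _ _ (K1_Lop us vs s)) K1_Rpow iter_mulmx_scale scalerA.
by rewrite /weight expr0 mulr1 mulrC.
Qed.

Lemma K01_eigen (s : seq F) (w : 'cV[F]_(dimV (size s))) lam x y :
  lam != 0 -> K1m s *m w = lam *: w ->
  (x *: K0m s + y *: K1m s) *m w = (x / lam + y * lam) *: w.
Proof.
move=> lam0 K1w; rewrite mulmxDl -!scalemxAl (K0_eigen lam0 K1w) K1w.
by rewrite !scalerA scalerDl.
Qed.

(* The scalars by which the off-diagonal blocks of R and L on V(a) (x) W act
   on R^k u0, respectively on L^t R^j u0, for W of diameter d. *)
Definition Rcoef (u v a : F) (d k : nat) : F :=
  u * (a / q) / weight d k 0 + v * q * weight d k 0.
Definition Lcoef (us vs a : F) (d j t : nat) : F :=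
  vs * (q / a * q) / weight d j t + us * weight d j t.

Lemma u0_cons (a : F) (s : seq F) : u0 (a :: s) = col_mx (u0 s) 0.
Proof. by []. Qed.

Lemma Rpow_cons u v a s j : Rpow u v (a :: s) j.+1 =
  col_mx (Rpow u v s j.+1) ((\sum_(k < j.+1) Rcoef u v a (size s) k) *: Rpow u v s j).
Proof.
rewrite Rop_cons u0_cons; apply: iter_lower_block => k.
by rewrite (K01_eigen _ _ (weight_neq0 _ _ _) (K1_Rpow u v s k)).
Qed.

Lemma zeta_cons u v us vs a s j :
  zeta q u v us vs (a :: s) j.+1 = zeta q u v us vs s j.+1
   + (\sum_(k < j.+1) Rcoef u v a (size s) k)
     * (\sum_(t < j.+1) Lcoef us vs a (size s) j t) * zeta q u v us vs s j.
Proof.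
rewrite /zeta Rpow_cons Lop_cons.
rewrite (@iter_upper_block _ _ _ _ _ _ (fun t => Lcoef us vs a (size s) j t)); last first.
  move=> t; rewrite iter_mulmx_scale -scalemxAr addrC.
  by rewrite (K01_eigen _ _ (weight_neq0 _ _ _) (K1_LRpow u v us vs s j t)) !scalerA mulrC.
rewrite u0_cons tr_col_mx trmx0 mul_row_col mul0mx addr0 mulmxDr.
rewrite iter_mulmx_scale -!scalemxAr !scalerA !mxE.
by congr (_ + _ * _); rewrite mulrC.
Qed.

Lemma Rpow_nilpotent u v s : Rpow u v s (size s).+1 = 0.
Proof.
elim: s => [|a s IH]; first by rewrite /= Rop_nil mul0mx.
by rewrite Rpow_cons iterS IH mulmx0 scaler0 col_mx0.
Qed.

Lemma zeta_overflow u v us vs s : zeta q u v us vs s (size s).+1 = 0.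
Proof. by rewrite /zeta Rpow_nilpotent iter_mulmx0 mulmx0 mxE. Qed.

Lemma zeta0_cons u v us vs a s : zeta q u v us vs (a :: s) 0 = zeta q u v us vs s 0.
Proof. by rewrite /zeta /= tr_col_mx trmx0 mul_row_col mul0mx addr0. Qed.

Lemma zeta0_nil u v us vs : zeta q u v us vs [::] 0 = 1.
Proof. by rewrite /zeta /= trmx1 mulmx1 mxE. Qed.

Variables b c bs cs u v us vs : F.
Hypotheses (b_neq0 : b != 0) (bs_neq0 : bs != 0) (c_neq0 : c != 0) (cs_neq0 : cs != 0).
Hypothesis q2_neq1 : q ^+ 2 != 1.
Hypothesis huvs : u * vs = - (b * bs * q^-1 * (q - q^-1) ^+ 2).
Hypothesis hvus : v * us = - (c * cs * q^-1 * (q - q^-1) ^+ 2).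

Lemma qV2_neq1 : q ^- 2 != 1.
Proof.
apply: contra q2_neq1 => /eqP q2.
by rewrite -[q ^+ 2]invrK q2 invr1.
Qed.

Lemma qdiff_neq0 : q - q^-1 != 0.
Proof.
apply: contra q2_neq1 => /eqP qq.
by rewrite expr2 -[X in q * X]subr0 -qq subKr mulfV.
Qed.

Lemma u_neq0 : u != 0.
Proof.
have nz : b * bs * q^-1 * (q - q^-1) ^+ 2 != 0.
  by rewrite !mulf_neq0 ?invr_eq0 ?expf_neq0 ?qdiff_neq0.
by apply: contraNneq nz => u_eq0; rewrite -oppr_eq0 -huvs u_eq0 mul0r.
Qed.

Lemma v_neq0 : v != 0.
Proof.
have nz : c * cs * q^-1 * (q - q^-1) ^+ 2 != 0.
  by rewrite !mulf_neq0 ?invr_eq0 ?expf_neq0 ?qdiff_neq0.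
by apply: contraNneq nz => v_eq0; rewrite -oppr_eq0 -hvus v_eq0 mul0r.
Qed.

(* The root of the Drinfel'd polynomial of V(a), and the constant terms of
   the polynomials f_i (so that f_i = theta i - X). *)
Definition rho (a : F) : F := (u * us * a / q + v * vs * q ^+ 3 / a) / (q - q^-1) ^+ 2.
Definition theta (i : nat) : F := b * bs * q ^- (2 * i) + c * cs * q ^+ (2 * i).

Lemma sum_Rcoef a d n : \sum_(k < n) Rcoef u v a d k =
  u * (a / q) * q ^- d * \sum_(k < n) (q ^+ 2) ^+ k
  + v * q * q ^+ d * \sum_(k < n) (q ^- 2) ^+ k.
Proof.
rewrite !mulr_sumr -big_split /=; apply: eq_bigr => k _.
rewrite /Rcoef /weight expr0 mulr1 !exprVn; field.
by rewrite !expf_neq0.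
Qed.

Lemma sum_Lcoef a d j n : a != 0 -> \sum_(t < n) Lcoef us vs a d j t =
  vs * (q / a * q) * q ^- d * (q ^+ 2) ^+ j * \sum_(t < n) (q ^- 2) ^+ t
  + us * q ^+ d * (q ^- 2) ^+ j * \sum_(t < n) (q ^+ 2) ^+ t.
Proof.
move=> a0; rewrite !mulr_sumr -big_split /=; apply: eq_bigr => t _.
rewrite /Lcoef /weight !exprVn; field.
by rewrite a0 !expf_neq0.
Qed.

Lemma Rcoef_Lcoef_sum a d j : a != 0 -> (j <= d)%N ->
  (\sum_(k < j.+1) Rcoef u v a d k) * (\sum_(t < j.+1) Lcoef us vs a d j t)
  = (q ^+ j.+1 - q ^- j.+1) ^+ 2 * (rho a - theta (d - j)).
Proof.
move=> a0 jd; rewrite sum_Rcoef sum_Lcoef // !geometric_sum ?qV2_neq1 //.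
have vsE : vs = - (b * bs * q^-1 * (q - q^-1) ^+ 2) / u.
  by rewrite -huvs [u * vs]mulrC mulfK ?u_neq0.
have usE : us = - (c * cs * q^-1 * (q - q^-1) ^+ 2) / v.
  by rewrite -hvus [v * us]mulrC mulfK ?v_neq0.
rewrite /rho /theta vsE usE -(subnK jd) addnK.
rewrite !exprVn (exprM q 2) !(exprAC q 2) exprD (exprS q j).
have := expf_neq0 j q_neq0; have := expf_neq0 (d - j) q_neq0.
move: (q ^+ j) (q ^+ (d - j)) => X E E0 X0.
field.
by rewrite E0 X0 q_neq0 a0 u_neq0 v_neq0 -expr2 mulN1r !subr_eq0 q2_neq1 eq_sym q2_neq1.
Qed.

Lemma qpow_diff_neq0 n : q ^+ (2 * n) != 1 -> q ^+ n - q ^- n != 0.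
Proof.
apply: contra => /eqP qn; apply/eqP.
by rewrite mulnC exprM expr2 -[X in _ * X]subr0 -qn subKr mulfV ?expf_neq0.
Qed.

Notation sigmaS s := (sigma q u v us vs s).

Lemma sigma_cons a s j : a != 0 -> (j <= size s)%N -> q ^+ (2 * j.+1) != 1 ->
  sigmaS (a :: s) j.+1 = sigmaS s j.+1 + (rho a - theta (size s - j)) * sigmaS s j.
Proof.
move=> a0 js /qpow_diff_neq0 T0.
rewrite /sigma zeta_cons Rcoef_Lcoef_sum // big_ord_recr /= invfM.
move: (\prod_(i < j) _)^-1 T0 => P; set T := q ^+ j.+1 - q ^- j.+1 => T0.
by field; rewrite T0.
Qed.

Lemma sigma0_cons a s : sigmaS (a :: s) 0 = sigmaS s 0.
Proof. by rewrite /sigma zeta0_cons. Qed.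

Lemma sigma0_nil : sigmaS [::] 0 = 1.
Proof. by rewrite /sigma zeta0_nil big_ord0 invr1 mulr1. Qed.

Lemma sigma_overflow s : sigmaS s (size s).+1 = 0.
Proof. by rewrite /sigma zeta_overflow mul0r. Qed.

Notation drinfeldS s := (drinfeld q b c bs cs u v us vs s).

Lemma drinfeld_cons a s : a != 0 -> feasible q (size s).+1 ->
  drinfeldS (a :: s) = ('X - (rho a)%:P) * drinfeldS s.
Proof.
move=> a0 feas; apply: (drinfeld_sum_recursion (th := theta)).
- exact: sigma0_cons.
- exact: sigma_overflow.
- by move=> j js; apply: sigma_cons => //; apply: feas; rewrite /= ltnS.
Qed.

Lemma drinfeld_nil : drinfeldS [::] = 1.
Proof. by rewrite /drinfeld /= big_ord1 sigma0_nil big_ord0 mulr1 expr0 mul1r. Qed.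

Lemma drinfeld_single a : a != 0 -> drinfeldS [:: a] = 'X - (rho a)%:P.
Proof.
move=> a0; rewrite drinfeld_cons // ?drinfeld_nil ?mulr1 // => i.
by case: i => [|[|]] //= _; rewrite muln1.
Qed.

Lemma drinfeld_multiplicative s : all (fun a => a != 0) s -> feasible q (size s) ->
  drinfeldS s = \prod_(a <- s) drinfeldS [:: a].
Proof.
elim: s => [|a s IH] /=; first by rewrite big_nil drinfeld_nil.
move=> /andP[a0 s0] feas; rewrite big_cons drinfeld_cons // drinfeld_single // IH //.
by move=> i /andP[i1 iS]; apply: feas; rewrite i1 ltnW.
Qed.

End StandardModule.

Theorem proposition7p13 (F : closedFieldType) (q b c bs cs u v us vs : F)
  (hq0 : q != 0) (hq2 : q ^+ 2 != 1)
  (hb : b != 0) (hc : c != 0) (hbs : bs != 0) (hcs : cs != 0)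
  (huvs : u * vs = - (b * bs * q^-1 * (q - q^-1) ^+ 2))
  (hvus : v * us = - (c * cs * q^-1 * (q - q^-1) ^+ 2))
  (s : seq F) (hs : all (fun a => a != 0) s) (hfeas : feasible q (size s)) :
  drinfeld q b c bs cs u v us vs s
  = \prod_(a <- s) drinfeld q b c bs cs u v us vs [:: a].
Proof. exact: drinfeld_multiplicative. Qed.
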